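(* Let $\lambda$ be a partition with $n$ parts and let $\beta$ be an upper $\lambda$-tuple, i.e. $\beta \in U_\lambda(n)$. Then the terminal pair $(\lambda,\beta)$ is nonpermutable if and only if $\beta$ is a gapless core $\lambda$-tuple that is bounded by its platform, i.e. if and only if $\beta \in UGC_\lambda(n) \cap UBP_\lambda(n)$.
   Context: Fix an integer $n \geq 1$ and write $[k] = \{1,\dots,k\}$ and $(a,b] = \{a+1,\dots,b\}$. A partition is $\lambda = (\lambda_1,\dots,\lambda_n)$ with $\lambda_1 \geq \dots \geq \lambda_n \geq 0$ integers. Let $R_\lambda \subseteq [n-1]$ be the set of $q \in [n-1]$ with $\lambda_q > \lambda_{q+1}$ (equivalently, the set of distinct column lengths of the Young diagram of $\lambda$ that are less than $n$); write its elements $q_1 < \dots < q_r$ ($r \geq 0$), and set $q_0 := 0$, $q_{r+1} := n$. For $h \in [r+1]$ the $h$-th carrel is the index interval $(q_{h-1}, q_h]$. A $\lambda$-tuple is an $n$-tuple $\beta = (\beta_1,\dots,\beta_n)$ with entries in $[n]$, considered together with this carrel structure; it is upper if $\beta_i \geq i$ for all $i \in [n]$. $U_\lambda(n)$ denotes the set of upper $\lambda$-tuples, partially ordered entrywise. Critical indices: let $\beta \in U_\lambda(n)$ and $h \in [r+1]$. Set $x_1 := q_h$. Recursively, given $x_{u-1}$, if there is an index $x$ with $q_{h-1} < x < x_{u-1}$ and $\beta_{x_{u-1}} - \beta_x > x_{u-1} - x$, let $x_u$ be the largest such $x$; otherwise stop. The indices $x_1 > x_2 > \cdots$ so obtained are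 the critical indices of $\beta$ in the $h$-th carrel; the pairs $(x_u, \beta_{x_u})$ are its critical pairs, and the sequence over $h$ of the sets of critical pairs is the critical list of $\beta$. For $i \in [n]$ let $x(i)$ be the smallest critical index of $\beta$ lying in the carrel containing $i$ with $x(i) \geq i$. The $\lambda$-platform of $\beta$ is $\Xi_\lambda(\beta) := \xi$ with $\xi_i := \beta_{x(i)}$ for $i \in [n]$. The critical list of $\beta$ is a flag critical list if for every $h \in [r]$ one has $\beta_{q_h} \leq \beta_k$, where $k$ is the smallest critical index of $\beta$ in the $(h+1)$-st carrel. $UGC_\lambda(n)$ (gapless core $\lambda$-tuples) is the set of $\beta \in U_\lambda(n)$ whose critical list is a flag critical list. $UBP_\lambda(n)$ (tuples bounded by their platform) is the set of $\beta \in U_\lambda(n)$ with $\beta_i \leq \Xi_\lambda(\beta)_i$ for all $i$. Lattice paths: lattice points are pairs $(a,b)$ of integers with $a \geq 0$, $b \geq 1$ (think of $a$ as the eastward coordinate and $b$ as the southward depth). A lattice path is a sequence of lattice points in which each consecutive step is either an easterly step $(a,b) \to (a+1,b)$ or a southerly step $(a,b) \to (a,b+1)$. An $n$-path is an $n$-tuple $(\Lambda_1,\dots,\Lambda_n)$ of lattice paths such that $\Lambda_m$ starts at $(n-m, m)$ for $m \in [n]$. Given $\beta \in U_\lambda(n)$, the terminals are the points $P_m := (\lambda_m + n - m, \beta_m)$, $m \in [n]$. For a permutation $\pi$ of $[n]$, let $\mathcal{LD}_\lambda(\beta;\pi)$ be the set of $n$-paths in which $\Lambda_m$ ends at $P_{\pi_m}$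 for each $m$ and no two distinct components share a lattice point. The terminal pair $(\lambda,\beta)$ is nonpermutable if $\mathcal{LD}_\lambda(\beta;\pi) = \emptyset$ for every permutation $\pi \neq (1,2,\dots,n)$. *)

(* All tuples are 1-based: lam, beta : nat -> nat,
   only the values at indices 1..n are relevant. *)
From mathcomp Require Import all_boot.
Set Implicit Arguments. Unset Strict Implicit. Unset Printing Implicit Defensive.

Definition is_partition (n : nat) (lam : nat -> nat) : Prop :=
  forall i, 1 <= i -> i < n -> lam i.+1 <= lam i.

Definition is_upper_tuple (n : nat) (beta : nat -> nat) : Prop :=
  forall i, 1 <= i <= n -> (1 <= beta i <= n) /\ i <= beta i.

Definition Rset (n : nat) (lam : nat -> nat) : seq nat :=
  [seq q <- iota 1 n.-1 | lam q.+1 < lam q].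

Definition qlist (n : nat) (lam : nat -> nat) : seq nat :=
  0 :: rcons (Rset n lam) n.

Definition qq (n : nat) (lam : nat -> nat) (h : nat) : nat := nth 0 (qlist n lam) h.

Definition rr (n : nat) (lam : nat -> nat) : nat := size (Rset n lam).

(* Critical indices in the carrel (a, b]: starting from x, the next one is the
   largest y with a < y < x and beta_x - beta_y > x - y.  The fuel argument only
   guarantees termination (the sequence strictly decreases, fuel = b suffices). *)
Fixpoint crit_from (beta : nat -> nat) (a x fuel : nat) : seq nat :=
  match fuel with
  | 0 => [:: x]
  | f.+1 =>
    let cand := [seq y <- iota a.+1 (x - a.+1) | beta y + (x - y) < beta x] in
    if cand is _ :: _ then x :: crit_from beta a (last 0 cand) f else [:: x]
  end.

Definition crit_carrel (beta : nat -> nat) (a b : nat) : seq nat :=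
  crit_from beta a b b.

Definition crit_h (n : nat) (lam beta : nat -> nat) (h : nat) : seq nat :=
  crit_carrel beta (qq n lam h.-1) (qq n lam h).

Definition carrel_lo (n : nat) (lam : nat -> nat) (i : nat) : nat :=
  last 0 [seq q <- qlist n lam | q < i].
Definition carrel_hi (n : nat) (lam : nat -> nat) (i : nat) : nat :=
  head n [seq q <- qlist n lam | i <= q].

Definition xcrit (n : nat) (lam beta : nat -> nat) (i : nat) : nat :=
  let b := carrel_hi n lam i in
  foldr minn b [seq x <- crit_carrel beta (carrel_lo n lam i) b | i <= x].

Definition platform (n : nat) (lam beta : nat -> nat) (i : nat) : nat :=
  beta (xcrit n lam beta i).

Definition flag_critical (n : nat) (lam beta : nat -> nat) : Prop :=
  forall h, 1 <= h <= rr n lam ->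
    beta (qq n lam h) <=
    beta (foldr minn (qq n lam h.+1) (crit_h n lam beta h.+1)).

(* beta in UGC_lambda(n) (beta is assumed upper) *)
Definition gapless_core (n : nat) (lam beta : nat -> nat) : Prop :=
  flag_critical n lam beta.

Definition bounded_by_platform (n : nat) (lam beta : nat -> nat) : Prop :=
  forall i, 1 <= i <= n -> beta i <= platform n lam beta i.

Definition lstep (p q : nat * nat) : bool :=
  (q == (p.1.+1, p.2)) || (q == (p.1, p.2.+1)).

Definition lattice_path (s : seq (nat * nat)) : bool :=
  if s is x :: s' then path lstep x s' && all (fun p => 1 <= p.2) s else false.

Definition is_perm_n (n : nat) (pi : nat -> nat) : Prop :=
  (forall m, 1 <= m <= n -> 1 <= pi m <= n) /\
  (forall m m', 1 <= m <= n -> 1 <= m' <= n -> pi m = pi m' -> m = m').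

Definition terminal (n : nat) (lam beta : nat -> nat) (m : nat) : nat * nat :=
  (lam m + n - m, beta m).

Definition in_LD (n : nat) (lam beta pi : nat -> nat)
    (Lam : nat -> seq (nat * nat)) : Prop :=
  (forall m, 1 <= m <= n ->
     [/\ lattice_path (Lam m),
         head (0, 0) (Lam m) = (n - m, m) &
         last (0, 0) (Lam m) = terminal n lam beta (pi m)]) /\
  (forall m m', 1 <= m <= n -> 1 <= m' <= n -> m <> m' ->
     forall p, p \in Lam m -> p \notin Lam m').

Definition nonpermutable (n : nat) (lam beta : nat -> nat) : Prop :=
  forall pi, is_perm_n n pi -> (exists2 m, 1 <= m <= n & pi m <> m) ->
    ~ exists Lam, in_LD n lam beta pi Lam.

(* Call (i, l) a descent of beta if i < l, beta_l < beta_i and beta_y - beta_l > y - l for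
   every y > l with lam_y = lam_l.  Both sides of the equivalence say that beta has no
   descent.

   On the combinatorial side, the l of a descent is a critical index of its carrel, so its
   platform value is beta_l; gaplessness makes the platform nondecreasing, and then
   Xi_i <= Xi_l = beta_l < beta_i contradicts boundedness.  Conversely, a violation of either
   condition exhibits an index i and a critical index k > i with beta_k < beta_i.

   On the side of paths, a lattice path is encoded by its column profile, and nonintersecting
   paths have profiles stacked strictly from north to south.  If nonintersecting paths realise
   pi <> id, take an inversion m < m' with k = pi_m maximal: then (pi_m', k) is a descent,
   because by maximality the paths ending at P_(k+1), P_(k+2), ... along the level of lam_k
   start ever further south.  Conversely, from a descent with i chosen maximal (so that
   beta_t <= beta_l for i < t < l) one realises the cycle (i i+1 ... l): the paths m < l are
   hooks, the paths m > l hug one another as closely as possible, and the path from l, which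
   ends at P_i, fits between them. *)

From mathcomp Require Import all_boot zify.
From Stdlib Require Import Lia Classical IndefiniteDescription.
Set Implicit Arguments. Unset Strict Implicit. Unset Printing Implicit Defensive.

Lemma sorted_leq_last (s : seq nat) x0 y :
  sorted leq s -> y \in s -> y <= last x0 s.
Proof.
elim: s x0 => [|a s IH] x0 //= s_sorted.
rewrite inE => /orP [/eqP -> | y_s]; last exact: IH (path_sorted s_sorted) y_s.
have /allP a_min := order_path_min leq_trans s_sorted.
by have := mem_last a s; rewrite inE => /orP [/eqP -> // | /a_min].
Qed.

Lemma sorted_head_leq (s : seq nat) x0 y :
  sorted leq s -> y \in s -> head x0 s <= y.
Proof.
case: s => [|a s] //= s_sorted; rewrite inE => /orP [/eqP -> // | y_s].
by have /allP := order_path_min leq_trans s_sorted; apply.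
Qed.

Lemma foldr_minn_leq d (s : seq nat) y : y \in s -> foldr minn d s <= y.
Proof.
elim: s => [|a s IH] //=; rewrite inE geq_min => /orP [/eqP -> | /IH ->].
  by rewrite leqnn.
by rewrite orbT.
Qed.

Lemma foldr_minn_mem d (s : seq nat) : foldr minn d s \in d :: s.
Proof.
elim: s => [|a s IH] /=; first by rewrite inE.
rewrite /minn; case: ifP => _; first by rewrite !inE eqxx orbT.
by move: IH; rewrite !inE => /orP [-> | ->]; rewrite ?orbT.
Qed.

Lemma exists_max_nat (P : nat -> Prop) N k :
  P k -> (forall k, P k -> k <= N) ->
  exists2 k, P k & forall k', P k' -> k' <= k.
Proof.
move=> Pk P_le.
suff max_above d : forall k, P k -> N - k < d -> exists2 k, P k & forall k', P k' -> k' <= k.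
  exact: max_above Pk (ltnSn _).
elim: d => [|d IH] {}k {}Pk lt_d //.
have [[k' [Pk' lt_kk']] | no_larger] := classic (exists k', P k' /\ k < k').
  by apply: (IH k' Pk'); have := P_le k' Pk'; lia.
exists k => // k' Pk'; rewrite leqNgt; apply/negP => lt_kk'.
by apply: no_larger; exists k'.
Qed.

Lemma last_exceeding (beta : nat -> nat) i l : i < l -> beta l < beta i ->
  exists j, [/\ i <= j < l, beta l < beta j & forall t, j < t -> t < l -> beta t <= beta l].
Proof.
move=> lt_il lt_beta.
pose P t := [&& i <= t, t < l & beta l < beta t].
have P_le t : P t -> t <= l by case/and3P => _ /ltnW.
have Pi : P i by rewrite /P leqnn lt_il lt_beta.
have [j /and3P [le_ij lt_jl lt_bj] j_max] := exists_max_nat Pi P_le.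
exists j; split=> //; first lia.
move=> t lt_jt lt_tl; rewrite leqNgt; apply/negP => lt_bt.
by have := j_max t; rewrite /P lt_tl lt_bt (leq_trans le_ij (ltnW lt_jt)) => /(_ isT); lia.
Qed.

Lemma partition_nonincr n lam i i' :
  is_partition n lam -> 1 <= i -> i <= i' -> i' <= n -> lam i' <= lam i.
Proof.
move=> lamP i_gt0; elim: i' => [|i' IH] le_ii' le_i'n; first lia.
have [lt_ii' | ] := ltnP i i'.+1; last by move=> ?; have -> : i'.+1 = i by lia.
have := lamP i' ltac:(lia) le_i'n; have := IH ltac:(lia) ltac:(lia); lia.
Qed.

(** * Carrels *)

Section Carrels.

Variables (n : nat) (lam : nat -> nat).

Lemma mem_Rset q : (q \in Rset n lam) = [&& 0 < q, q < n & lam q.+1 < lam q].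
Proof. by rewrite /Rset mem_filter mem_iota; case: n => [|n'] /=; apply/idP/idP; lia. Qed.

Lemma mem_qlist q : (q \in qlist n lam) = [|| q == 0, q == n | q \in Rset n lam].
Proof. by rewrite /qlist inE mem_rcons inE. Qed.

Lemma qlist_leq_n q : q \in qlist n lam -> q <= n.
Proof. by rewrite mem_qlist mem_Rset => /or3P [/eqP -> | /eqP -> | ]; lia. Qed.

Hypothesis n_gt0 : 0 < n.

Lemma sorted_qlist : sorted ltn (qlist n lam).
Proof.
have R_sorted : sorted ltn (Rset n lam).
  exact: sorted_filter ltn_trans _ _ (iota_ltn_sorted _ _).
rewrite /qlist /= rcons_path (path_sortedE ltn_trans) R_sorted andbT.
apply/andP; split; first by apply/allP => q; rewrite mem_Rset; lia.
case E: (Rset n lam) => [|a s] //=.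
have : last a s \in Rset n lam by rewrite E mem_last.
by rewrite mem_Rset; lia.
Qed.

Lemma sorted_qlist_leq : sorted leq (qlist n lam).
Proof. by apply: sub_sorted sorted_qlist => x y /ltnW. Qed.

Lemma size_qlist : size (qlist n lam) = (rr n lam).+2.
Proof. by rewrite /qlist /= size_rcons. Qed.

Lemma qq_last : qq n lam (rr n lam).+1 = n.
Proof. by rewrite /qq /qlist /= nth_rcons ltnn eqxx. Qed.

Lemma qq_mem h : h <= (rr n lam).+1 -> qq n lam h \in qlist n lam.
Proof. by move=> le_h; apply: mem_nth; rewrite size_qlist. Qed.

Lemma qq_ltn h h' : h < h' -> h' <= (rr n lam).+1 -> qq n lam h < qq n lam h'.
Proof.
move=> lt_hh' le_h'; apply: (sorted_ltn_nth ltn_trans 0 sorted_qlist) => //;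
  rewrite inE size_qlist; lia.
Qed.

Lemma qq_leq h h' : h <= h' -> h' <= (rr n lam).+1 -> qq n lam h <= qq n lam h'.
Proof.
move=> le_hh' le_h'; apply: (sorted_leq_nth leq_trans leqnn 0 sorted_qlist_leq) => //;
  rewrite inE size_qlist; lia.
Qed.

Lemma qq_index q : q \in qlist n lam -> qq n lam (index q (qlist n lam)) = q.
Proof. exact: nth_index. Qed.

Definition is_carrel (a b : nat) :=
  [/\ a \in qlist n lam, b \in qlist n lam, a < b &
      forall z, z \in qlist n lam -> ~~ (a < z < b)].

Lemma carrel_leq_n a b : is_carrel a b -> b <= n.
Proof. by case=> _ b_q _ _; exact: qlist_leq_n. Qed.

Lemma carrel_qq h : h <= rr n lam -> is_carrel (qq n lam h) (qq n lam h.+1).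
Proof.
move=> le_h; split; [apply: qq_mem; lia | apply: qq_mem; lia | apply: qq_ltn; lia |].
move=> z z_q; apply/negP => /andP [lt_hz lt_zh].
have lt_k : index z (qlist n lam) < (rr n lam).+2 by rewrite -size_qlist index_mem.
have [le_kh | lt_hk] := leqP (index z (qlist n lam)) h.
  by have := qq_leq le_kh (leqW le_h); rewrite qq_index //; lia.
by have := qq_leq lt_hk (lt_k : _ <= _); rewrite qq_index //; lia.
Qed.

Lemma qq_of_inner q : q \in qlist n lam -> 0 < q < n ->
  exists2 h, 1 <= h <= rr n lam & qq n lam h = q.
Proof.
move=> q_q /andP [q_gt0 lt_qn]; exists (index q (qlist n lam)); last exact: qq_index.
have lt_k : index q (qlist n lam) < (rr n lam).+2 by rewrite -size_qlist index_mem.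
have := qq_index q_q; move: lt_k; case: (index _ _) => [|k] lt_k.
  by rewrite /qq /=; lia.
by case: (eqVneq k (rr n lam)) => [-> | ]; [rewrite qq_last; lia | lia].
Qed.

Lemma carrel_loP i : 1 <= i ->
  [/\ carrel_lo n lam i \in qlist n lam, carrel_lo n lam i < i &
      forall z, z \in qlist n lam -> z < i -> z <= carrel_lo n lam i].
Proof.
move=> i_gt0; rewrite /carrel_lo.
set F := [seq q <- qlist n lam | q < i].
have F_sorted : sorted leq F by exact: sorted_filter leq_trans _ _ sorted_qlist_leq.
have F0 : 0 \in F by rewrite mem_filter mem_qlist eqxx i_gt0.
have : last 0 F \in F by have := mem_last 0 F; rewrite inE => /orP [/eqP -> | ].
rewrite mem_filter => /andP [lt_li l_q]; split => // z z_q lt_zi.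
by apply: sorted_leq_last; rewrite // mem_filter lt_zi.
Qed.

Lemma carrel_hiP i : i <= n ->
  [/\ carrel_hi n lam i \in qlist n lam, i <= carrel_hi n lam i &
      forall z, z \in qlist n lam -> i <= z -> carrel_hi n lam i <= z].
Proof.
move=> le_in; rewrite /carrel_hi.
set F := [seq q <- qlist n lam | i <= q].
have Fn : n \in F by rewrite mem_filter mem_qlist eqxx orbT le_in.
have : head n F \in F by case: F Fn => [|a s] //= _; rewrite inE eqxx.
have F_sorted : sorted leq F by exact: sorted_filter leq_trans _ _ sorted_qlist_leq.
rewrite mem_filter => /andP [le_ih h_q]; split => // z z_q le_iz.
by apply: sorted_head_leq; rewrite // mem_filter le_iz.
Qed.

Lemma carrel_of i : 1 <= i <= n ->
  is_carrel (carrel_lo n lam i) (carrel_hi n lam i) /\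
  carrel_lo n lam i < i <= carrel_hi n lam i.
Proof.
move=> /andP [i_gt0 le_in].
have [lo_q lt_lo lo_max] := carrel_loP i_gt0.
have [hi_q le_hi hi_min] := carrel_hiP le_in.
split; last lia.
split => //; first lia.
move=> z z_q; apply/negP => /andP [lt_lz lt_zh].
by have [/(lo_max z z_q) | /(hi_min z z_q)] := ltnP z i; lia.
Qed.

Lemma carrel_lohi_eq a b i : is_carrel a b -> a < i <= b ->
  carrel_lo n lam i = a /\ carrel_hi n lam i = b.
Proof.
move=> [a_q b_q lt_ab no_inner] /andP [lt_ai le_ib].
have i_gt0 : 1 <= i by lia.
have [lo_q lt_lo lo_max] := carrel_loP i_gt0.
have [hi_q le_hi hi_min] := carrel_hiP (leq_trans le_ib (qlist_leq_n b_q)).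
have := lo_max a a_q lt_ai; have := hi_min b b_q le_ib.
have := no_inner _ lo_q; have := no_inner _ hi_q; lia.
Qed.

Hypothesis lamP : is_partition n lam.

Lemma carrel_lam_const a b l : is_carrel a b -> a < l <= b -> lam l = lam b.
Proof.
move=> [_ b_q lt_ab no_inner] /andP [lt_al le_lb].
have lam_step y : l <= y < b -> lam y.+1 = lam y.
  move=> /andP [le_ly lt_yb].
  have y_q : y \notin qlist n lam by apply/negP => /no_inner; lia.
  have le_bn := qlist_leq_n b_q.
  have := @lamP y ltac:(lia) ltac:(lia).
  by move: y_q; rewrite mem_qlist mem_Rset; lia.
suff lam_shift k : l + k <= b -> lam (l + k) = lam l.
  by rewrite -(subnKC le_lb) lam_shift ?subnKC.
elim: k => [|k IH] le_lkb; first by rewrite addn0.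
by rewrite addnS lam_step ?IH; lia.
Qed.

Lemma carrel_lam_drop a b : is_carrel a b -> b < n -> lam b.+1 < lam b.
Proof.
by case=> _ + lt_ab _ lt_bn; rewrite mem_qlist mem_Rset => /or3P [/eqP | /eqP | ]; lia.
Qed.

Lemma carrel_level_bound a b l y : is_carrel a b -> a < l <= b ->
  l < y <= n -> lam y = lam l -> y <= b.
Proof.
move=> ab l_ab /andP [lt_ly le_yn] lam_yl; rewrite leqNgt; apply/negP => lt_by.
have := carrel_lam_drop ab (leq_trans lt_by le_yn).
have := carrel_lam_const ab l_ab.
have := partition_nonincr lamP (ltn0Sn b) lt_by le_yn; lia.
Qed.

End Carrels.

(** * Critical indices and the platform *)

Section Critical.

Variable beta : nat -> nat.

Definition critical a b z :=
  a < z <= b /\ forall y, z < y <= b -> beta z + (y - z) < beta y.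

Lemma critical_top a b : a < b -> critical a b b.
Proof. by move=> lt_ab; split => [|y]; lia. Qed.

Lemma critical_leq a b z y : critical a b z -> z <= y <= b -> beta z <= beta y.
Proof.
move=> [_ z_crit] /andP [le_zy le_yb].
have [lt_zy | le_yz] := ltnP z y; first by have := z_crit y; lia.
by have -> : y = z by lia.
Qed.

Lemma critical_extend a x' x z : z <= x' < x ->
  beta x' + (x - x') < beta x ->
  (forall y, x' < y < x -> beta x <= beta y + (x - y)) ->
  critical a x' z -> critical a x z.
Proof.
move=> /andP [le_zx' lt_x'x] x'_cand above_x' [z_range z_crit].
have z_x' : beta z + (x' - z) <= beta x'.
  have [lt_zx' | le_x'z] := ltnP z x'; first by have := z_crit x'; lia.
  have -> : z = x' by lia.
  by rewrite subnn addn0.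
split=> [|y /andP [lt_zy le_yx]]; first lia.
have [le_yx' | lt_x'y] := leqP y x'; first by apply: z_crit; lia.
have [lt_yx | le_xy] := ltnP y x; first by have := above_x' y ltac:(lia); lia.
have -> : y = x by lia.
lia.
Qed.

Lemma mem_crit_from a f x z : a < x -> x - a <= f ->
  z \in crit_from beta a x f <-> critical a x z.
Proof.
elim: f x z => [|f IH] x z lt_ax le_f /=; first lia.
set cand := [seq y <- iota a.+1 (x - a.+1) | beta y + (x - y) < beta x].
have mem_cand y : y \in cand = (a < y < x) && (beta y + (x - y) < beta x).
  by rewrite mem_filter mem_iota andbC; congr (_ && _); apply/idP/idP; lia.
have crit_cand : critical a x z -> z < x -> z \in cand.
  by move=> [z_range z_crit] lt_zx; rewrite mem_cand; have := z_crit x; lia.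
case E: cand => [|c cs].
  rewrite inE; split=> [/eqP -> | z_crit]; first exact: critical_top.
  apply/eqP; have [lt_zx | ] := ltnP z x; last by case: z_crit; lia.
  by have := crit_cand z_crit lt_zx; rewrite E.
set x' := last 0 (c :: cs).
have x'_cand : x' \in cand by rewrite E /x' /= mem_last.
have cand_max y : y \in cand -> y <= x'.
  move=> y_cand; rewrite /x' -E; apply: sorted_leq_last => //.
  exact: sorted_filter leq_trans _ _ (iota_sorted _ _).
move: (x'_cand); rewrite mem_cand => /andP [/andP [lt_ax' lt_x'x] x'_jump].
have IH' := IH x' z lt_ax' ltac:(lia).
rewrite inE; split=> [/orP [/eqP -> | /IH' z_crit] | z_crit].
- exact: critical_top.
- apply: (critical_extend (x' := x')) => //; first by case: z_crit; lia.
  move=> y /andP [lt_x'y lt_yx]; rewrite leqNgt; apply/negP => y_jump.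
  by have := cand_max y; rewrite mem_cand y_jump; lia.
- have [-> | ne_zx] := eqVneq z x; first by [].
  apply/orP; right; apply/IH'; case: (z_crit) => z_range z_crit'.
  have le_zx' := cand_max z (crit_cand z_crit ltac:(lia)).
  by split=> [|y ?]; [lia | apply: z_crit'; lia].
Qed.

Lemma mem_crit_carrel a b z : a < b -> z \in crit_carrel beta a b <-> critical a b z.
Proof. by move=> lt_ab; apply: mem_crit_from => //; lia. Qed.

End Critical.

Section Platform.

Variables (n : nat) (lam beta : nat -> nat).
Hypothesis n_gt0 : 0 < n.

Notation lo i := (carrel_lo n lam i).
Notation hi i := (carrel_hi n lam i).

Lemma xcritP i : 1 <= i <= n ->
  [/\ critical beta (lo i) (hi i) (xcrit n lam beta i), i <= xcrit n lam beta i &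
      forall z, critical beta (lo i) (hi i) z -> i <= z -> xcrit n lam beta i <= z].
Proof.
move=> i_range; have [_ /andP [lt_lo le_hi]] := carrel_of lam n_gt0 i_range.
have crit_mem z := mem_crit_carrel beta z (leq_trans lt_lo le_hi).
rewrite /xcrit; set F := [seq x <- crit_carrel beta (lo i) (hi i) | i <= x].
have F_min z : critical beta (lo i) (hi i) z -> i <= z -> foldr minn (hi i) F <= z.
  by move=> /crit_mem z_crit le_iz; apply: foldr_minn_leq; rewrite mem_filter le_iz.
have := foldr_minn_mem (hi i) F; rewrite inE => /orP [/eqP x_hi | ].
  split; [rewrite x_hi; exact: critical_top (leq_trans lt_lo le_hi) | by rewrite x_hi |].
  exact: F_min.
by rewrite mem_filter => /andP [le_ix /crit_mem x_crit]; split=> //; exact: F_min.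
Qed.

Lemma platform_critical l : 1 <= l <= n ->
  critical beta (lo l) (hi l) l -> platform n lam beta l = beta l.
Proof.
move=> l_range l_crit; have [_ le_lx x_min] := xcritP l_range.
by rewrite /platform; congr beta; apply/eqP; rewrite eqn_leq le_lx x_min.
Qed.

Lemma platform_step i : flag_critical n lam beta -> 1 <= i < n ->
  platform n lam beta i <= platform n lam beta i.+1.
Proof.
move=> flag /andP [i_gt0 lt_in].
have i_range : 1 <= i <= n by lia.
have [i_carrel /andP [lt_lo le_hi]] := carrel_of lam n_gt0 i_range.
have [x_crit le_ix x_min] := xcritP i_range.
have [y_crit le_iy _] := xcritP (ltac:(lia) : 1 <= i.+1 <= n).
have [lt_ih | ] := ltnP i (hi i).
  have [lo_Si hi_Si] := carrel_lohi_eq n_gt0 i_carrel (ltac:(lia) : lo i < i.+1 <= hi i).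
  rewrite lo_Si hi_Si in y_crit.
  by apply: critical_leq x_crit _; rewrite x_min //; case: y_crit; lia.
move=> le_hi_i; have hi_i : hi i = i by lia.
have i_q : i \in qlist n lam by case: i_carrel => _; rewrite hi_i.
have [h /andP [h_gt0 le_hr] qq_h] := qq_of_inner n_gt0 i_q (ltac:(lia) : 0 < i < n).
have next_carrel := carrel_qq n_gt0 le_hr; rewrite qq_h in next_carrel.
have lt_i_next : i < qq n lam h.+1 by case: next_carrel.
have [lo_next hi_next] := carrel_lohi_eq n_gt0 next_carrel (ltac:(lia) : i < i.+1 <= qq n lam h.+1).
have -> : platform n lam beta i = beta i.
  by apply: platform_critical => //; rewrite hi_i; apply: critical_top; lia.
have := flag h ltac:(lia); rewrite qq_h /crit_h /= qq_h.
rewrite /platform /xcrit lo_next hi_next.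
have above_i : all (fun x => i.+1 <= x) (crit_carrel beta i (qq n lam h.+1)).
  by apply/allP => x /(mem_crit_carrel _ _ lt_i_next) [x_range _]; lia.
by rewrite (all_filterP above_i).
Qed.

Lemma platform_mono i i' : flag_critical n lam beta -> 1 <= i -> i <= i' <= n ->
  platform n lam beta i <= platform n lam beta i'.
Proof.
move=> flag i_gt0; elim: i' => [|i' IH] /andP [le_ii' le_i'n]; first lia.
have [lt_ii' | ] := ltnP i i'.+1; last by move=> ?; have -> : i'.+1 = i by lia.
apply: leq_trans (IH ltac:(lia)) _; apply: platform_step => //; lia.
Qed.

End Platform.

(** * Descents *)

Definition descent n (lam beta : nat -> nat) := exists i l,
  [/\ 1 <= i, i < l, l <= n, beta l < beta i &
      forall y, l < y -> y <= n -> lam y = lam l -> beta l + (y - l) < beta y].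

Section Descent.

Variables (n : nat) (lam beta : nat -> nat).
Hypotheses (n_gt0 : 0 < n) (lamP : is_partition n lam).

Notation lo i := (carrel_lo n lam i).
Notation hi i := (carrel_hi n lam i).

Lemma descent_of_critical a b i k : is_carrel n lam a b -> critical beta a b k ->
  1 <= i < k -> beta k < beta i -> descent n lam beta.
Proof.
move=> ab [k_range k_crit] /andP [i_gt0 lt_ik] lt_beta.
have le_bn := carrel_leq_n ab.
exists i, k; split=> //; first lia.
move=> y lt_ky le_yn lam_yk; apply: k_crit.
by have := carrel_level_bound n_gt0 lamP ab k_range (ltac:(lia) : k < y <= n) lam_yk; lia.
Qed.

Lemma gapless_bounded_no_descent :
  gapless_core n lam beta -> bounded_by_platform n lam beta -> ~ descent n lam beta.
Proof.
move=> flag bounded [i [l [i_gt0 lt_il le_ln lt_beta l_jump]]].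
have l_range : 1 <= l <= n by lia.
have [l_carrel /andP [lt_lo le_hi]] := carrel_of lam n_gt0 l_range.
have l_crit : critical beta (lo l) (hi l) l.
  split=> [|y /andP [lt_ly le_yh]]; first lia.
  apply: l_jump => //; first by have := carrel_leq_n l_carrel; lia.
  rewrite (carrel_lam_const n_gt0 lamP l_carrel (ltac:(lia) : lo l < y <= hi l)).
  by rewrite (carrel_lam_const n_gt0 lamP l_carrel (ltac:(lia) : lo l < l <= hi l)).
have := bounded i ltac:(lia).
have := platform_mono n_gt0 flag i_gt0 (ltac:(lia) : i <= l <= n).
by rewrite (platform_critical n_gt0 l_range l_crit); lia.
Qed.

Lemma no_descent_gapless : ~ descent n lam beta -> gapless_core n lam beta.
Proof.
move=> no_desc h /andP [h_gt0 le_hr]; rewrite leqNgt; apply/negP => lt_beta.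
have h_carrel := carrel_qq n_gt0 le_hr.
have [_ _ lt_qq _] := h_carrel.
rewrite /crit_h /= in lt_beta; set k := foldr minn _ _ in lt_beta.
have k_crit : critical beta (qq n lam h) (qq n lam h.+1) k.
  apply/(mem_crit_carrel _ _ lt_qq).
  have := foldr_minn_mem (qq n lam h.+1) (crit_carrel beta (qq n lam h) (qq n lam h.+1)).
  rewrite inE -/k => /orP [/eqP -> | //].
  by apply/mem_crit_carrel => //; exact: critical_top.
have qq_gt0 : 0 < qq n lam h by have := qq_ltn n_gt0 h_gt0 (ltac:(lia) : h <= (rr n lam).+1).
apply: no_desc; apply: (descent_of_critical h_carrel k_crit) lt_beta.
by case: k_crit; lia.
Qed.

Lemma no_descent_bounded : ~ descent n lam beta -> bounded_by_platform n lam beta.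
Proof.
move=> no_desc i i_range; rewrite leqNgt; apply/negP => lt_beta.
have [x_crit le_ix _] := xcritP lam beta n_gt0 i_range.
have [i_carrel _] := carrel_of lam n_gt0 i_range.
have ne_ix : i <> xcrit n lam beta i by move=> E; move: lt_beta; rewrite /platform -E ltnn.
apply: no_desc; apply: (descent_of_critical i_carrel x_crit) lt_beta; lia.
Qed.

Lemma gapless_bounded_iff_no_descent :
  gapless_core n lam beta /\ bounded_by_platform n lam beta <-> ~ descent n lam beta.
Proof.
split=> [[flag bounded] | no_desc]; first exact: gapless_bounded_no_descent.
by split; [exact: no_descent_gapless | exact: no_descent_bounded].
Qed.

End Descent.

(** * Lattice paths as profiles *)

(* A lattice path from (x0, y0) ending in column x1 is recorded by its profile b:
   it meets column c in the rows from [profile_floor x0 y0 b c] (where it enters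
   the column) down to [b c] (where it leaves it). *)
Definition profile_floor (x0 y0 : nat) (b : nat -> nat) c :=
  if c == x0 then y0 else b c.-1.

Definition on_profile x0 y0 x1 (b : nat -> nat) c r :=
  [&& x0 <= c, c <= x1, profile_floor x0 y0 b c <= r & r <= b c].

Definition profile x0 y0 x1 (b : nat -> nat) :=
  [/\ x0 <= x1, 1 <= y0, y0 <= b x0 & forall c, x0 <= c -> c < x1 -> b c <= b c.+1].

Lemma profile_floor_start x0 y0 b : profile_floor x0 y0 b x0 = y0.
Proof. by rewrite /profile_floor eqxx. Qed.

Lemma profile_floor_gt x0 y0 b c : x0 < c -> profile_floor x0 y0 b c = b c.-1.
Proof. by move=> lt_x0c; rewrite /profile_floor gtn_eqF. Qed.

Section Profile.

Variables (x0 y0 x1 : nat) (b : nat -> nat).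
Hypothesis bP : profile x0 y0 x1 b.

Lemma profile_mono c c' : x0 <= c -> c <= c' -> c' <= x1 -> b c <= b c'.
Proof.
case: bP => _ _ _ b_step le_x0c; elim: c' => [|c' IH] le_cc' le_c'x1.
  by have -> : c = 0 by lia.
have [lt_cc' | ] := ltnP c c'.+1; last by move=> ?; have -> : c'.+1 = c by lia.
exact: leq_trans (IH ltac:(lia) ltac:(lia)) (b_step c' ltac:(lia) ltac:(lia)).
Qed.

Lemma profile_floor_leq c : x0 <= c <= x1 -> profile_floor x0 y0 b c <= b c.
Proof.
move=> /andP [le_x0c le_cx1]; rewrite /profile_floor.
have [-> | ne_cx0] := eqVneq c x0; first by case: bP.
by apply: profile_mono; lia.
Qed.

Lemma profile_floor_geq c : x0 <= c <= x1 -> y0 <= profile_floor x0 y0 b c.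
Proof.
move=> /andP [le_x0c le_cx1]; rewrite /profile_floor.
have [// | ne_cx0] := eqVneq c x0.
have := profile_mono (leqnn x0) (ltac:(lia) : x0 <= c.-1) (ltac:(lia) : c.-1 <= x1).
by case: bP; lia.
Qed.

End Profile.

Lemma profile_cons_east x0 y0 x1 b : profile x0.+1 y0 x1 b ->
  let b' (c : nat) := if c == x0 then y0 else b c in
  profile x0 y0 x1 b' /\
  forall c r, on_profile x0 y0 x1 b' c r = ((c, r) == (x0, y0)) || on_profile x0.+1 y0 x1 b c r.
Proof.
move=> [lt_x0x1 y0_gt0 le_y0b b_step] b'; split.
  split=> //=; [lia | by rewrite /b' eqxx | move=> c le_x0c lt_cx1].
  rewrite /b' (_ : (c.+1 == x0) = false); last by apply/negbTE; lia.
  by have [-> | ne_cx0] := eqVneq c x0; [ | apply: b_step; lia].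
move=> c r; rewrite /on_profile /profile_floor /b' xpair_eqE.
have [-> | ne_cx0] := eqVneq c x0; first lia.
have [-> | ne_cx0'] := eqVneq c x0.+1; first by rewrite /= eqxx; lia.
by rewrite (_ : (c.-1 == x0) = false); [lia | apply/negbTE; lia].
Qed.

Lemma profile_cons_south x0 y0 x1 b : 1 <= y0 -> profile x0 y0.+1 x1 b ->
  profile x0 y0 x1 b /\
  forall c r, on_profile x0 y0 x1 b c r = ((c, r) == (x0, y0)) || on_profile x0 y0.+1 x1 b c r.
Proof.
move=> y0_gt0 [le_x0x1 _ lt_y0b b_step]; split; first by split=> //; lia.
by move=> c r; rewrite /on_profile /profile_floor xpair_eqE; case: eqVneq => [-> | _]; lia.
Qed.

Lemma lattice_path_profile s p : path lstep p s -> all (fun q => 1 <= q.2) (p :: s) ->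
  exists b, [/\ profile p.1 p.2 (last p s).1 b, b (last p s).1 = (last p s).2 &
    forall c r, ((c, r) \in p :: s) = on_profile p.1 p.2 (last p s).1 b c r].
Proof.
elim: s p => [|p' s IH] [x0 y0] /=.
  move=> _ /andP [y0_gt0 _]; exists (fun=> y0); split=> // c r.
  by rewrite inE /on_profile /profile_floor xpair_eqE; case: eqVneq; lia.
move=> /andP [step s_path] /andP [y0_gt0 s_rows].
have [b [bP b_last b_mem]] := IH p' s_path s_rows.
move: step bP b_last b_mem; rewrite /lstep /= => /orP [] /eqP -> /= bP b_last b_mem.
- have [b'P b'_mem] := profile_cons_east bP.
  exists (fun c : nat => if c == x0 then y0 else b c); split=> //.
    by rewrite (_ : ((last (x0.+1, y0) s).1 == x0) = false) //; apply/negbTE; case: bP; lia.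
  by move=> c r; rewrite b'_mem -b_mem in_cons.
- have [b'P b'_mem] := profile_cons_south y0_gt0 bP.
  by exists b; split=> // c r; rewrite b'_mem -b_mem in_cons.
Qed.

Definition column_segment x y d : seq (nat * nat) := [seq (x, r) | r <- iota y d.+1].

Fixpoint profile_walk (b : nat -> nat) x y k : seq (nat * nat) :=
  column_segment x y (b x - y) ++ (if k is k'.+1 then profile_walk b x.+1 (b x) k' else [::]).

Lemma mem_column_segment x y d c r :
  ((c, r) \in column_segment x y d) = (c == x) && (y <= r <= y + d).
Proof.
apply/mapP/idP=> [[r' + [-> ->]] | /andP [/eqP -> r_range]].
  by rewrite mem_iota eqxx; lia.
by exists r; rewrite // mem_iota; lia.
Qed.

Lemma column_segment_path x y d :
  path lstep (x, y) (behead (column_segment x y d)) /\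
  last (x, y) (behead (column_segment x y d)) = (x, y + d).
Proof.
elim: d y => [|d IH] y /=; first by rewrite addn0.
have [IH_path IH_last] := IH y.+1.
by rewrite /lstep /= eqxx orbT IH_path IH_last addSnnS.
Qed.

Lemma profile_behead x y x1 b : profile x y x1 b -> x < x1 -> profile x.+1 (b x) x1 b.
Proof.
move=> [_ y_gt0 le_yb b_step] lt_xx1.
by split=> [||| c ? ?]; [lia | lia | apply: b_step | apply: b_step]; lia.
Qed.

Lemma profile_walkP b x1 k x y : x + k = x1 -> profile x y x1 b ->
  let s := profile_walk b x y k in
  [/\ s = (x, y) :: behead s, path lstep (x, y) (behead s),
      last (x, y) (behead s) = (x1, b x1) &
      forall c r, ((c, r) \in s) = on_profile x y x1 b c r].
Proof.
elim: k x y => [|k IH] x y x1E bP; have [_ y_gt0 le_yb _] := bP.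
  rewrite addn0 in x1E; subst x1; rewrite /= cats0.
  have [seg_path seg_last] := column_segment_path x y (b x - y).
  split=> //; first by rewrite seg_last; congr pair; lia.
  move=> c r; rewrite -/(column_segment x y (b x - y)) mem_column_segment.
  by rewrite /on_profile /profile_floor; case: eqVneq => [-> | ?]; lia.
have bP' := profile_behead bP (ltac:(lia) : x < x1).
have [tl_head tl_path tl_last tl_mem] := IH x.+1 (b x) (etrans (addSnnS x k) x1E) bP'.
have [seg_path seg_last] := column_segment_path x y (b x - y).
have walkS : profile_walk b x y k.+1 =
    column_segment x y (b x - y) ++ profile_walk b x.+1 (b x) k by [].
rewrite walkS; split=> [|||c r] //.
- rewrite cat_path seg_path tl_head /= tl_path /lstep /=.
  by rewrite seg_last (_ : y + (b x - y) = b x) ?eqxx //; lia.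
- by rewrite last_cat seg_last tl_head /= tl_last.
rewrite mem_cat tl_mem mem_column_segment /on_profile /profile_floor.
have [-> | ne_cx] := eqVneq c x; first by rewrite (ltn_eqF (ltnSn x)); lia.
by have [-> /= | ?] := eqVneq c x.+1; lia.
Qed.

Definition profile_path b x0 y0 x1 := profile_walk b x0 y0 (x1 - x0).

Lemma profile_pathP b x0 y0 x1 : profile x0 y0 x1 b ->
  let s := profile_path b x0 y0 x1 in
  [/\ lattice_path s, head (0, 0) s = (x0, y0), last (0, 0) s = (x1, b x1) &
      forall c r, ((c, r) \in s) = on_profile x0 y0 x1 b c r].
Proof.
move=> bP /=; have [le_x0x1 y0_gt0 _ _] := bP.
move: (profile_walkP (subnKC le_x0x1) bP) => /=; rewrite /profile_path.
case: (profile_walk _ _ _ _) => [[] // | p s [[->] s_path s_last s_mem]].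
rewrite /= in s_path s_last; split=> //; rewrite /lattice_path s_path.
apply/allP=> -[c r].
rewrite s_mem => /and4P [le_x0c le_cx1 le_fr _] /=.
by have := profile_floor_geq bP (ltac:(lia) : x0 <= c <= x1); lia.
Qed.

(** * Permutations of [n] *)

Section Permutations.

Variables (n : nat) (pi : nat -> nat).
Hypothesis piP : is_perm_n n pi.

Lemma perm_n_surj k : 1 <= k <= n -> exists2 m, 1 <= m <= n & pi m = k.
Proof.
case: piP => pi_range pi_inj k_range.
have mem_s m : (m \in iota 1 n) = (1 <= m <= n) by rewrite mem_iota; lia.
have t_uniq : uniq (map pi (iota 1 n)).
  by rewrite map_inj_in_uniq ?iota_uniq // => a b; rewrite !mem_s; exact: pi_inj.
have t_sub : {subset map pi (iota 1 n) <= iota 1 n}.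
  by move=> x /mapP [m m_s ->]; rewrite mem_s; apply: pi_range; rewrite -mem_s.
have [_ t_eq] := uniq_min_size t_uniq t_sub (eq_leq (esym (size_map pi _))).
have : k \in map pi (iota 1 n) by rewrite t_eq mem_s.
by move=> /mapP [m m_s ->]; exists m; rewrite // -mem_s.
Qed.

Lemma perm_n_increasing_id :
  (forall a b, 1 <= a -> a < b -> b <= n -> pi a < pi b) ->
  forall m, 1 <= m <= n -> pi m = m.
Proof.
case: piP => pi_range _ pi_incr.
have pi_geq m : 1 <= m <= n -> m <= pi m.
  elim: m => [|m IH] // /andP [_ le_mn].
  have [-> | m_gt0] := posnP m; first by have := pi_range 1; lia.
  by have := IH ltac:(lia); have := pi_incr m m.+1 m_gt0 (ltnSn m) le_mn; lia.
have pi_leq d m : m + d = n -> 1 <= m -> pi m <= m.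
  elim: d m => [|d IH] m mdE m_gt0; first by have := pi_range m; lia.
  by have := IH m.+1 ltac:(lia) ltac:(lia); have := pi_incr m m.+1 m_gt0 (ltnSn m); lia.
by move=> m m_range; have := pi_geq m m_range; have := pi_leq (n - m) m; lia.
Qed.

Lemma perm_n_inversion : (exists2 m, 1 <= m <= n & pi m <> m) ->
  exists m m', [/\ 1 <= m, m < m', m' <= n & pi m' < pi m].
Proof.
move=> [m0 m0_range pi_m0]; apply: NNPP => no_inv; apply/pi_m0/perm_n_increasing_id => //.
move=> a b a_gt0 lt_ab le_bn; case: (ltngtP (pi a) (pi b)) => // [lt_ba | eq_ab].
  by case: no_inv; exists a, b.
by have := (proj2 piP) a b ltac:(lia) ltac:(lia) eq_ab; lia.
Qed.

Lemma perm_n_max_inversion : (exists2 m, 1 <= m <= n & pi m <> m) ->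
  exists m m', [/\ 1 <= m, m < m', m' <= n, pi m' < pi m &
    forall m1 m2, 1 <= m1 -> m1 < m2 -> m2 <= n -> pi m2 < pi m1 -> pi m1 <= pi m].
Proof.
move=> /perm_n_inversion [m [m' inv]].
pose P k := exists m m', [/\ 1 <= m, m < m', m' <= n, pi m' < pi m & pi m = k].
have P_le k : P k -> k <= n.
  by move=> [m1 [m2 [m1_gt0 lt_12 le_2n _ <-]]]; have := (proj1 piP) m1; lia.
have Pm : P (pi m) by case: inv => *; exists m, m'.
have [k [m1 [m2 [m1_gt0 lt_12 le_2n inv12 k_def]]] k_max] := exists_max_nat Pm P_le.
exists m1, m2; split=> // a b a_gt0 lt_ab le_bn inv_ab.
by rewrite k_def; apply: k_max; exists a, b.
Qed.

End Permutations.

(** * Nonintersecting paths force a descent *)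

Definition xterm n (lam : nat -> nat) k := lam k + n - k.

Lemma xterm_decr n lam a b : is_partition n lam -> 1 <= a -> a < b -> b <= n ->
  xterm n lam b < xterm n lam a.
Proof.
move=> lamP a_gt0 lt_ab le_bn.
by have := partition_nonincr lamP a_gt0 (ltnW lt_ab) le_bn; rewrite /xterm; lia.
Qed.

Lemma xterm_nonincr n lam a b : is_partition n lam -> 1 <= a -> a <= b -> b <= n ->
  xterm n lam b <= xterm n lam a.
Proof.
move=> lamP a_gt0 le_ab le_bn.
by have := partition_nonincr lamP a_gt0 le_ab le_bn; rewrite /xterm; lia.
Qed.

Section NonintersectingProfiles.

Variables (n : nat) (lam beta pi : nat -> nat) (B : nat -> nat -> nat).

Notation X k := (xterm n lam k).
Notation floor m := (profile_floor (n - m) m (B m)).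

Hypothesis lamP : is_partition n lam.
Hypothesis piP : is_perm_n n pi.
Hypothesis B_profile : forall m, 1 <= m <= n ->
  profile (n - m) m (X (pi m)) (B m) /\ B m (X (pi m)) = beta (pi m).
Hypothesis B_disjoint : forall m m', 1 <= m <= n -> 1 <= m' <= n -> m <> m' ->
  forall c r, on_profile (n - m) m (X (pi m)) (B m) c r ->
  ~~ on_profile (n - m') m' (X (pi m')) (B m') c r.

(* Path m starts strictly north of path m' on the common column n - m, and two
   nonintersecting paths cannot cross. *)
Lemma profile_below m m' c : 1 <= m -> m < m' -> m' <= n ->
  n - m <= c -> c <= X (pi m) -> c <= X (pi m') -> B m c < floor m' c.
Proof.
move=> m_gt0 lt_mm' le_m'n.
have [m_prof _] := B_profile (ltac:(lia) : 1 <= m <= n).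
have [m'_prof _] := B_profile (ltac:(lia) : 1 <= m' <= n).
have no_cross c' : n - m <= c' -> c' <= X (pi m) -> c' <= X (pi m') ->
    floor m c' <= floor m' c' -> B m c' < floor m' c'.
  move=> le_c' le_cm le_cm' le_floor; rewrite ltnNge; apply/negP => le_m'm.
  have on_m : on_profile (n - m) m (X (pi m)) (B m) c' (floor m' c') by apply/and4P.
  have on_m' : on_profile (n - m') m' (X (pi m')) (B m') c' (floor m' c').
    apply/and4P; split=> //; try lia.
    by apply: (profile_floor_leq m'_prof); lia.
  have := B_disjoint (ltac:(lia) : 1 <= m <= n) (ltac:(lia) : 1 <= m' <= n)
    (ltac:(lia) : m <> m') on_m.
  by rewrite on_m'.
elim: c => [|c IH] le_c le_cm le_cm'; apply: no_cross => //.
  have m_start : n - m = 0 by lia.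
  have m'_start : n - m' = 0 by lia.
  by rewrite -{1}m_start -{1}m'_start !profile_floor_start; lia.
have [c_start | lt_c] := eqVneq c.+1 (n - m).
  rewrite -c_start profile_floor_start.
  have := profile_floor_geq m'_prof (ltac:(lia) : n - m' <= c.+1 <= X (pi m')); lia.
rewrite !profile_floor_gt /=; try lia.
have := IH ltac:(lia) ltac:(lia) ltac:(lia).
have := profile_floor_leq m'_prof (ltac:(lia) : n - m' <= c <= X (pi m')); lia.
Qed.

(* M is the path ending at P_(k+d) (Q when d = 0); it enters column X k - d strictly south
   of row beta k + d. *)
Lemma descent_chain k Q :
  (forall m1 m2, 1 <= m1 -> m1 < m2 -> m2 <= n -> pi m2 < pi m1 -> pi m1 <= k) ->
  1 <= k -> 1 <= Q <= n -> pi Q < k -> n - Q < X k -> beta k < floor Q (X k) ->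
  forall d, k + d <= n -> lam (k + d) = lam k ->
  exists M, [/\ 1 <= M <= n, pi M <= k + d, 0 < d -> pi M = k + d,
                n - M < X k - d & beta k + d < floor M (X k - d)].
Proof.
move=> k_max k_gt0 Q_range lt_Qk Q_start Q_above.
have pi_range := (proj1 piP).
elim=> [|d IH] le_kdn lam_kd.
  by exists Q; rewrite addn0 subn0; split; lia.
have lam_kd' : lam (k + d) = lam k.
  have := partition_nonincr lamP k_gt0 (leq_addr d k) (ltac:(lia) : k + d <= n).
  have le_kdn' : (k + d).+1 <= n by rewrite -addnS.
  have := partition_nonincr lamP (ltac:(lia) : 1 <= k + d) (leqnSn _) le_kdn'.
  by rewrite addnS in lam_kd *; lia.
have [M [M_range le_piM piM_eq M_start M_above]] := IH ltac:(lia) lam_kd'.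
have [M' M'_range piM'] := perm_n_surj piP (ltac:(lia) : 1 <= k + d.+1 <= n).
have [M_prof _] := B_profile M_range.
have le_XM : X k - d <= X (pi M).
  have piM_gt0 : 1 <= pi M by have := pi_range M M_range; lia.
  have := xterm_nonincr lamP piM_gt0 le_piM (ltac:(lia) : k + d <= n).
  by rewrite /xterm lam_kd'; lia.
have XM' : X (pi M') = X k - d.+1.
  by rewrite piM' /xterm lam_kd; have := pi_range M' M'_range; lia.
have lt_MM' : M < M'.
  case: (ltngtP M M') => // [lt_M'M | eq_MM']; last by move: piM'; rewrite -eq_MM'; lia.
  by have := k_max M' M (ltac:(lia)) lt_M'M (ltac:(lia)) (ltac:(lia)); lia.
have below := profile_below (ltac:(lia) : 1 <= M) lt_MM' (ltac:(lia) : M' <= n)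
  (ltac:(lia) : n - M <= X k - d.+1) (ltac:(lia)) (ltac:(lia) : X k - d.+1 <= X (pi M')).
have floorM : floor M (X k - d) = B M (X k - d.+1).
  by rewrite profile_floor_gt; [congr (B M); lia | lia].
by exists M'; split; lia.
Qed.

Lemma nonintersecting_profiles_descent :
  (exists2 m, 1 <= m <= n & pi m <> m) -> descent n lam beta.
Proof.
move=> /(perm_n_max_inversion piP) [m [Q [m_gt0 lt_mQ le_Qn lt_pi pi_max]]].
have pi_range := (proj1 piP).
have [m_range Q_range] : 1 <= pi m <= n /\ 1 <= pi Q <= n.
  by have := pi_range m; have := pi_range Q; lia.
have [m_prof m_end] := B_profile (ltac:(lia) : 1 <= m <= n).
have [Q_prof Q_end] := B_profile (ltac:(lia) : 1 <= Q <= n).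
have lt_XmQ : X (pi m) < X (pi Q) by apply: (xterm_decr lamP); lia.
have m_start : n - m <= X (pi m) by case: m_prof.
have Q_above : beta (pi m) < floor Q (X (pi m)).
  by rewrite -m_end; apply: profile_below => //; lia.
exists (pi Q), (pi m); split=> //; try lia.
  have := profile_floor_leq Q_prof (ltac:(lia) : n - Q <= X (pi m) <= X (pi Q)).
  have := profile_mono Q_prof (ltac:(lia) : n - Q <= X (pi m)) (ltnW lt_XmQ) (leqnn _).
  by rewrite Q_end; lia.
move=> y lt_my le_yn lam_ym.
have yE : pi m + (y - pi m) = y by lia.
have [M [M_range _ piM M_start M_above]] :=
  descent_chain (k := pi m) (Q := Q) pi_max (ltac:(lia)) (ltac:(lia)) lt_pi (ltac:(lia))
    Q_above (ltac:(lia) : pi m + (y - pi m) <= n) (ltac:(by rewrite yE)).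
have [M_prof M_end] := B_profile M_range.
have piMy : pi M = y by rewrite -yE; apply: piM; lia.
rewrite piMy in M_prof M_end.
have XMy : X y = X (pi m) - (y - pi m) by rewrite /xterm lam_ym; lia.
have := profile_floor_leq M_prof (ltac:(lia) : n - M <= X y <= X y).
by rewrite M_end XMy; lia.
Qed.

End NonintersectingProfiles.

(** * Realising a cycle from a descent *)

Section TightProfiles.

Variables (n : nat) (lam beta : nat -> nat).

Notation X k := (xterm n lam k).

(* The southernmost profile from row m to row beta m staying strictly north of the tight
   profile from m.+1; the fuel f = n - m covers the recursion on m. *)
Fixpoint tight_rec f m c :=
  if f is f'.+1 then
    if (m < n) && (c <= X m.+1) then minn (beta m) (tight_rec f' m.+1 c.-1).-1 else beta m
  else beta m.

Definition tight m c := tight_rec (n - m) m c.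

Definition tight_to t m c :=
  if (m < n) && (c <= X m.+1) then minn t (tight m.+1 c.-1).-1 else t.

Lemma tightE m c : m <= n -> tight m c = tight_to (beta m) m c.
Proof.
rewrite /tight /tight_to => le_mn; have [lt_mn | ] := ltnP m n.
  have -> : n - m = (n - m.+1).+1 by lia.
  by rewrite /= lt_mn.
by move=> ?; have -> : n - m = 0 by lia.
Qed.

Lemma tight_rec_mono f m c c' : c <= c' -> tight_rec f m c <= tight_rec f m c'.
Proof.
elim: f m c c' => [|f IH] m c c' le_cc' //=; case: (m < n) => //=.
case: (leqP c' (X m.+1)) => [le_c' | lt_c']; case: (leqP c (X m.+1)) => le_c //=; try lia.
by have := IH m.+1 c.-1 c'.-1 ltac:(lia); lia.
Qed.

Lemma tight_to_mono t m c c' : c <= c' -> tight_to t m c <= tight_to t m c'.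
Proof.
move=> le_cc'; rewrite /tight_to; case: (m < n) => //=.
case: (leqP c' (X m.+1)) => [le_c' | lt_c']; case: (leqP c (X m.+1)) => le_c //=; try lia.
by have := tight_rec_mono (n - m.+1) m.+1 (ltac:(lia) : c.-1 <= c'.-1); rewrite /tight; lia.
Qed.

Lemma tight_to_end t m c : m <= n -> (m = n \/ X m.+1 < c) -> tight_to t m c = t.
Proof. by move=> le_mn end_c; rewrite /tight_to; case: andP => //; lia. Qed.

Hypothesis betaP : is_upper_tuple n beta.

Lemma tight_geq m c : 1 <= m <= n -> n - m <= c -> m <= tight m c.
Proof.
suff tight_geq_at d : forall m c, m + d = n -> 1 <= m -> n - m <= c -> m <= tight m c.
  by move=> m_range; apply: (tight_geq_at (n - m)); lia.
elim: d => [|d IH] {}m {}c mdE m_gt0 le_c.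
  by rewrite /tight (_ : n - m = 0) /=; [have [] := betaP (ltac:(lia) : 1 <= m <= n) | lia].
rewrite tightE /tight_to; last lia.
have [_ le_mb] := betaP (ltac:(lia) : 1 <= m <= n).
case: andP => // [[lt_mn _]].
by have := IH m.+1 c.-1 ltac:(lia) ltac:(lia) ltac:(lia); lia.
Qed.

Lemma tight_to_geq t m c : 1 <= m <= n -> m <= t -> n - m <= c -> m <= tight_to t m c.
Proof.
move=> m_range le_mt le_c; rewrite /tight_to; case: andP => // [[lt_mn _]].
by have := tight_geq (ltac:(lia) : 1 <= m.+1 <= n) (ltac:(lia) : n - m.+1 <= c.-1); lia.
Qed.

Hypothesis lamP : is_partition n lam.

(* Along a level of lam the terminal columns drop by one per index, so the tight
   paths from l.+1, l.+2, ... inherit the strict jumps of beta after l. *)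
Lemma tight_chain l : 1 <= l ->
  (forall y, l < y -> y <= n -> lam y = lam l -> beta l + (y - l) < beta y) ->
  forall y, l < y <= n -> lam y = lam l -> beta l + (y - l) < tight y (X y).-1.
Proof.
move=> l_gt0 l_jump.
suff chain_at d : forall y, y + d = n -> l < y -> lam y = lam l ->
    beta l + (y - l) < tight y (X y).-1.
  by move=> y /andP [lt_ly le_yn]; apply: (chain_at (n - y)); lia.
elim: d => [|d IH] y ydE lt_ly lam_yl.
  by rewrite /tight (_ : n - y = 0) /=; [apply: l_jump; lia | lia].
rewrite tightE /tight_to; last lia.
have lt_yn : y < n by lia.
rewrite lt_yn /=; case: (leqP (X y).-1 (X y.+1)) => [le_X | _]; last by apply: l_jump; lia.
have lam_Sy : lam y.+1 = lam y.
  by have := @lamP y ltac:(lia) lt_yn; move: le_X; rewrite /xterm; lia.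
have -> : (X y).-1.-1 = (X y.+1).-1 by rewrite /xterm; lia.
have := IH y.+1 ltac:(lia) ltac:(lia) ltac:(lia).
by have := l_jump y lt_ly (ltnW lt_yn) lam_yl; lia.
Qed.

End TightProfiles.

Definition cycle_up j l m := if j <= m < l then m.+1 else if m == l then j else m.

Section CycleUp.

Variables j l : nat.
Hypothesis lt_jl : j < l.

Lemma cycle_up_lt m : m < l -> m <= cycle_up j l m <= m.+1.
Proof. by move=> lt_ml; rewrite /cycle_up; case: ifP => _; [ | rewrite ltn_eqF]; lia. Qed.

Lemma cycle_up_ltj m : m < j -> cycle_up j l m = m.
Proof. by move=> lt_mj; rewrite /cycle_up ifF ?ltn_eqF //; lia. Qed.

Lemma cycle_up_geqj m : j <= m < l -> cycle_up j l m = m.+1.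
Proof. by move=> m_range; rewrite /cycle_up m_range. Qed.

Lemma cycle_up_l : cycle_up j l l = j.
Proof. by rewrite /cycle_up ltnn andbF eqxx. Qed.

Lemma cycle_up_gt m : l < m -> cycle_up j l m = m.
Proof. by move=> lt_lm; rewrite /cycle_up ifF ?gtn_eqF //; lia. Qed.

Lemma cycle_up_mono m m' : m < m' -> m' < l -> cycle_up j l m < cycle_up j l m'.
Proof.
move=> lt_mm' lt_m'l; rewrite /cycle_up !ltn_eqF ?(ltn_trans lt_mm') //.
by case: ifP; case: ifP; lia.
Qed.

Lemma cycle_up_perm n : 1 <= j -> l <= n -> is_perm_n n (cycle_up j l).
Proof.
move=> j_gt0 le_ln; split=> [m m_range | m m' m_range m'_range]; rewrite /cycle_up.
  by case: ifP => ?; [ | case: eqP => ?]; lia.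
case: (ltnP m j) => ?; case: (ltnP m' j) => ?; case: (ltnP m l) => ?; case: (ltnP m' l) => ? /=;
  try lia; case: eqP => ?; try lia; case: eqP => ?; lia.
Qed.

End CycleUp.

Definition hook n lam (beta : nat -> nat) m k c := if c < xterm n lam k then m else beta k.

Lemma hook_profile n lam beta m k : n - m <= xterm n lam k -> 1 <= m -> m <= beta k ->
  profile (n - m) m (xterm n lam k) (hook n lam beta m k).
Proof.
rewrite /hook => le_start m_gt0 le_mb; split=> //; first by case: ifP.
by move=> c _ lt_c; rewrite lt_c; case: ifP.
Qed.

Section CycleConstruction.

Variables (n : nat) (lam beta : nat -> nat) (j l : nat).
Hypotheses (lamP : is_partition n lam) (betaP : is_upper_tuple n beta).
Hypotheses (j_gt0 : 1 <= j) (lt_jl : j < l) (le_ln : l <= n) (lam_l_gt0 : 1 <= lam l).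
Hypothesis lt_beta_lj : beta l < beta j.
Hypothesis beta_between : forall t, j < t -> t < l -> beta t <= beta l.
Hypothesis l_jump : forall y, l < y -> y <= n -> lam y = lam l -> beta l + (y - l) < beta y.

Notation X k := (xterm n lam k).
Notation sigma := (cycle_up j l).

(* Paths m < l are hooks: east along row m, then south to the terminal of sigma m.  Paths
   m > l are tight, and path l is the tight path down to row beta j. *)
Definition cycle_profile m :=
  if m < l then hook n lam beta m (sigma m)
  else if m == l then tight_to n lam beta (beta j) l
  else tight n lam beta m.

Notation floor m := (profile_floor (n - m) m (cycle_profile m)).

Lemma cycle_profile_hook m : 1 <= m < l ->
  profile (n - m) m (X (sigma m)) (cycle_profile m) /\
  cycle_profile m (X (sigma m)) = beta (sigma m).
Proof.
move=> /andP [m_gt0 lt_ml]; rewrite /cycle_profile lt_ml /hook ltnn; split=> //.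
have [le_m_sm le_sm] := andP (cycle_up_lt lt_jl lt_ml).
have [_ le_b] := betaP (ltac:(lia) : 1 <= sigma m <= n).
apply: hook_profile => //; last lia.
have := partition_nonincr lamP (ltac:(lia) : 1 <= sigma m) (ltac:(lia) : sigma m <= l) le_ln.
by rewrite /xterm; lia.
Qed.

Lemma cycle_profile_pivot :
  profile (n - l) l (X (sigma l)) (cycle_profile l) /\
  cycle_profile l (X (sigma l)) = beta (sigma l).
Proof.
rewrite /cycle_profile ltnn eqxx cycle_up_l.
have [_ le_lb] := betaP (ltac:(lia) : 1 <= l <= n).
have lt_Xlj : X l < X j by apply: (xterm_decr lamP); lia.
split; last first.
  apply: tight_to_end => //; have [lt_ln | ] := ltnP l n; [right | left; lia].
  by have := xterm_decr lamP j_gt0 (ltn_trans lt_jl (ltnSn l)) lt_ln; lia.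
split=> [|||c _ _]; [rewrite /xterm; lia | lia | | exact: tight_to_mono].
by apply: (tight_to_geq lam betaP); lia.
Qed.

Lemma cycle_profile_gt m : l < m -> cycle_profile m = tight n lam beta m.
Proof. by move=> lt_lm; rewrite /cycle_profile ltnNge ltnW //= gtn_eqF. Qed.

Lemma cycle_profile_tight m : l < m <= n ->
  profile (n - m) m (X (sigma m)) (cycle_profile m) /\
  cycle_profile m (X (sigma m)) = beta (sigma m).
Proof.
move=> /andP [lt_lm le_mn]; rewrite cycle_profile_gt // cycle_up_gt //.
have [_ le_mb] := betaP (ltac:(lia) : 1 <= m <= n).
split; last first.
  rewrite tightE //; apply: tight_to_end => //; have [lt_mn | ] := ltnP m n; [right | left; lia].
  by have := xterm_decr lamP (ltac:(lia) : 1 <= m) (ltnSn m) lt_mn; lia.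
split=> [|||c _ _]; [rewrite /xterm; lia | lia | | rewrite !tightE //; exact: tight_to_mono].
by rewrite tightE //; apply: (tight_to_geq lam betaP); lia.
Qed.

Lemma cycle_profileP m : 1 <= m <= n ->
  profile (n - m) m (X (sigma m)) (cycle_profile m) /\
  cycle_profile m (X (sigma m)) = beta (sigma m).
Proof.
move=> /andP [m_gt0 le_mn]; case: (ltngtP m l) => [lt_ml | lt_lm | ->].
- by apply: cycle_profile_hook; lia.
- by apply: cycle_profile_tight; lia.
- exact: cycle_profile_pivot.
Qed.

Lemma cycle_profile_tight_step p c : l <= p < n -> n - p <= c -> c <= X p.+1 ->
  cycle_profile p c < tight n lam beta p.+1 c.-1.
Proof.
move=> /andP [le_lp lt_pn] le_c le_cX.
have tight_Sp :=
  tight_geq lam betaP (ltac:(lia) : 1 <= p.+1 <= n) (ltac:(lia) : n - p.+1 <= c.-1).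
have to_below t : tight_to n lam beta t p c < tight n lam beta p.+1 c.-1.
  by rewrite /tight_to lt_pn le_cX /=; lia.
rewrite /cycle_profile; have -> : (p < l) = false by lia.
case: eqP => [pE | _]; first by rewrite -pE; exact: to_below.
by rewrite tightE; [exact: to_below | lia].
Qed.

Lemma cycle_profile_tight_chain m m' c : l <= m -> m < m' <= n ->
  n - m <= c -> c <= X m' -> cycle_profile m c < tight n lam beta m' c.-1.
Proof.
move=> le_lm; elim: m' => [|m' IH] /andP [lt_mm' le_m'n] le_c le_cX; first lia.
have [m'E | ne_m'm] := eqVneq m' m; first by subst m'; apply: cycle_profile_tight_step; lia.
have lt_X : X m'.+1 < X m' by apply: (xterm_decr lamP); lia.
have := IH (ltac:(lia)) le_c (ltac:(lia)).
have := tight_rec_mono n lam beta (n - m') m' (leq_pred c).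
have := cycle_profile_tight_step (ltac:(lia) : l <= m' < n) (ltac:(lia) : n - m' <= c) le_cX.
by rewrite cycle_profile_gt /tight; lia.
Qed.

Lemma cycle_profile_hooks m m' c : 1 <= m -> m < m' -> m' < l ->
  n - m <= c -> c <= X (sigma m') -> cycle_profile m c < floor m' c.
Proof.
move=> m_gt0 lt_mm' lt_m'l le_c le_cX; rewrite profile_floor_gt; last lia.
have lt_sigma := cycle_up_mono lt_jl lt_mm' lt_m'l.
have [le_m_sm _] := andP (cycle_up_lt lt_jl (ltn_trans lt_mm' lt_m'l)).
have [_ le_sm'] := andP (cycle_up_lt lt_jl lt_m'l).
have lt_X : X (sigma m') < X (sigma m) by apply: (xterm_decr lamP); lia.
rewrite /cycle_profile (ltn_trans lt_mm' lt_m'l) lt_m'l /hook.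
have -> : c < X (sigma m) by lia.
have -> : c.-1 < X (sigma m') by lia.
lia.
Qed.

Lemma cycle_profile_hook_tight m m' c : 1 <= m < l -> l < m' <= n ->
  n - m <= c -> c <= X m' -> cycle_profile m c < floor m' c.
Proof.
move=> /andP [m_gt0 lt_ml] /andP [lt_lm' le_m'n] le_c le_cX.
rewrite profile_floor_gt; last lia.
have [le_m_sm le_sm] := andP (cycle_up_lt lt_jl lt_ml).
have lt_X : X m' < X (sigma m) by apply: (xterm_decr lamP); lia.
have := tight_geq lam betaP (ltac:(lia) : 1 <= m' <= n) (ltac:(lia) : n - m' <= c.-1).
rewrite (cycle_profile_gt lt_lm') /cycle_profile lt_ml /hook.
have -> : c < X (sigma m) by lia.
lia.
Qed.

(* The only delicate crossing: the hook m turning south at column X (m.+1) against the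
   path from l.  A collision there forces m.+1 = l and lam (l.+1) = lam l, and then the
   jumps of beta after l keep the tight path from l.+1 far enough south. *)
Lemma cycle_profile_hook_pivot m c : 1 <= m < l ->
  n - m <= c -> c <= X (sigma m) -> c <= X j -> cycle_profile m c < floor l c.
Proof.
move=> /andP [m_gt0 lt_ml] le_c le_cXm le_cXj; rewrite profile_floor_gt; last lia.
have lt_l_piv : l <= tight_to n lam beta (beta j) l c.-1.
  by have [_ ?] := betaP (ltac:(lia) : 1 <= l <= n); apply: (tight_to_geq lam betaP); lia.
rewrite /cycle_profile lt_ml ltnn eqxx /hook; case: ifP => [_ | le_Xc]; first lia.
have cE : c = X (sigma m) by lia.
have le_jm : j <= m.
  rewrite leqNgt; apply/negP => lt_mj; move: le_cXj; rewrite cE cycle_up_ltj //.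
  by have := xterm_decr lamP m_gt0 lt_mj (ltac:(lia) : j <= n); lia.
rewrite cycle_up_geqj ?le_jm // in cE *.
have lt_bj : beta m.+1 < beta j.
  have [lt_Sml | ] := ltnP m.+1 l.
    by have := beta_between (ltac:(lia) : j < m.+1) lt_Sml; lia.
  by move=> ?; have -> : m.+1 = l by lia.
rewrite /tight_to; case: andP => [[lt_ln le_cX] | _]; last exact: lt_bj.
have lam_ml := partition_nonincr lamP (ltac:(lia) : 1 <= m.+1) (ltac:(lia) : m.+1 <= l) le_ln.
have lam_lSl := @lamP l (ltac:(lia)) lt_ln.
have [Sm_l lam_Sl] : m.+1 = l /\ lam l.+1 = lam l by move: le_cX; rewrite cE /xterm; lia.
have := tight_chain lamP (ltac:(lia) : 1 <= l) l_jump (ltac:(lia) : l < l.+1 <= n) lam_Sl.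
have -> : c.-1.-1 = (X l.+1).-1 by rewrite cE /xterm Sm_l lam_Sl; lia.
by rewrite Sm_l in lt_bj *; lia.
Qed.

Lemma cycle_profile_below m m' c : 1 <= m -> m < m' -> m' <= n ->
  n - m <= c -> c <= X (sigma m) -> c <= X (sigma m') -> cycle_profile m c < floor m' c.
Proof.
move=> m_gt0 lt_mm' le_m'n le_c le_cXm le_cXm'.
case: (ltngtP m' l) => [lt_m'l | lt_lm' | m'E].
- exact: cycle_profile_hooks.
- rewrite cycle_up_gt // in le_cXm'.
  have [lt_ml | le_lm] := ltnP m l; first by apply: cycle_profile_hook_tight; lia.
  rewrite profile_floor_gt; last lia.
  by rewrite (cycle_profile_gt lt_lm'); apply: cycle_profile_tight_chain; lia.
- by subst m'; rewrite cycle_up_l in le_cXm'; apply: cycle_profile_hook_pivot; lia.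
Qed.

Lemma cycle_paths : exists Lam, in_LD n lam beta sigma Lam.
Proof.
pose Lam m := profile_path (cycle_profile m) (n - m) m (X (sigma m)).
have mem_Lam m c r : 1 <= m <= n ->
    ((c, r) \in Lam m) = on_profile (n - m) m (X (sigma m)) (cycle_profile m) c r.
  by move=> m_range; have [_ _ _] := profile_pathP (proj1 (cycle_profileP m_range)); apply.
have apart m m' c r : 1 <= m -> m < m' -> m' <= n ->
    (c, r) \in Lam m -> (c, r) \notin Lam m'.
  move=> m_gt0 lt_mm' le_m'n; rewrite !mem_Lam; try lia.
  move=> /and4P [le_c le_cX _ le_r]; apply/negP => /and4P [_ le_cX' le_fr _].
  by have := cycle_profile_below m_gt0 lt_mm' le_m'n le_c le_cX le_cX'; lia.
exists Lam; split=> [m m_range | m m' m_range m'_range ne_mm' [c r] on_m].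
  have [m_prof m_end] := cycle_profileP m_range.
  have [Lam_path Lam_head Lam_last _] := profile_pathP m_prof.
  by split=> //; rewrite Lam_last m_end.
have [/andP [m_gt0 le_mn] /andP [m'_gt0 le_m'n]] := (m_range, m'_range).
case: (ltngtP m m') => [lt_mm' | lt_m'm | eq_mm'] //; first exact: apart on_m.
by apply/negP => on_m'; have := apart _ _ _ _ m'_gt0 lt_m'm le_mn on_m'; rewrite on_m.
Qed.

End CycleConstruction.

Section Permutability.

Variables (n : nat) (lam beta : nat -> nat).
Hypotheses (lamP : is_partition n lam) (betaP : is_upper_tuple n beta).

Lemma descent_lam_gt0 i l : 1 <= i < l -> l <= n -> beta l < beta i ->
  (forall y, l < y -> y <= n -> lam y = lam l -> beta l + (y - l) < beta y) ->
  1 <= lam l.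
Proof.
move=> /andP [i_gt0 lt_il] le_ln lt_beta l_jump; rewrite lt0n; apply/negP => /eqP lam_l0.
have [/andP [_ le_bi] _] := betaP (ltac:(lia) : 1 <= i <= n).
have [_ le_lb] := betaP (ltac:(lia) : 1 <= l <= n).
have [lt_ln | ] := ltnP l n; last lia.
have lam_n0 : lam n = lam l.
  by have := partition_nonincr lamP (ltac:(lia) : 1 <= l) (ltnW lt_ln) (leqnn n); lia.
have [/andP [_ le_bn] _] := betaP (ltac:(lia) : 1 <= n <= n).
by have := l_jump n lt_ln (leqnn n) lam_n0; lia.
Qed.

Lemma descent_permutable : descent n lam beta -> ~ nonpermutable n lam beta.
Proof.
move=> [i [l [i_gt0 lt_il le_ln lt_beta l_jump]]] nonperm.
have lam_l_gt0 := descent_lam_gt0 (ltac:(lia) : 1 <= i < l) le_ln lt_beta l_jump.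
have [j [/andP [le_ij lt_jl] lt_bj j_max]] := last_exceeding lt_il lt_beta.
apply: (nonperm (cycle_up j l)); first by apply: cycle_up_perm; lia.
  by exists j; rewrite ?cycle_up_geqj; lia.
by apply: cycle_paths => //; lia.
Qed.

Lemma no_descent_nonpermutable : ~ descent n lam beta -> nonpermutable n lam beta.
Proof.
move=> no_desc pi piP pi_ne [Lam [Lam_paths Lam_disj]]; apply: no_desc.
have /functional_choice [B BP] : forall m, exists b : nat -> nat, 1 <= m <= n ->
    (profile (n - m) m (xterm n lam (pi m)) b /\ b (xterm n lam (pi m)) = beta (pi m)) /\
    forall c r, ((c, r) \in Lam m) = on_profile (n - m) m (xterm n lam (pi m)) b c r.
  move=> m; case: (boolP (1 <= m <= n)) => m_range; last by exists (fun=> 0).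
  have [] := Lam_paths m m_range.
  case: (Lam m) => [|p s] //= /andP [p_path rows] pE Lam_last; subst p.
  have [b [bP b_last b_mem]] := lattice_path_profile p_path rows.
  by rewrite Lam_last in bP b_last b_mem; exists b.
apply: (nonintersecting_profiles_descent (B := B) lamP piP) pi_ne; first by move=> m /BP [].
move=> m m' m_range m'_range ne_mm' c r.
by rewrite -(proj2 (BP m m_range)) -(proj2 (BP m' m'_range)); exact: Lam_disj.
Qed.

Lemma nonpermutable_iff_no_descent : nonpermutable n lam beta <-> ~ descent n lam beta.
Proof.
split=> [nonperm desc | ]; first exact: descent_permutable desc nonperm.
exact: no_descent_nonpermutable.
Qed.

End Permutability.

Theorem theorem5p1 (n : nat) (lam beta : nat -> nat) :
  0 < n -> is_partition n lam -> is_upper_tuple n beta ->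
  (nonpermutable n lam beta <->
   gapless_core n lam beta /\ bounded_by_platform n lam beta).
Proof.
move=> n_gt0 lamP betaP.
by rewrite nonpermutable_iff_no_descent // gapless_bounded_iff_no_descent.
Qed.
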